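(* Let $\Phi\in\mathbb{R}^{n_{\mathscr D}\times n_g}$ and $y\in\mathbb{R}^{n_{\mathscr D}}$ with $\Phi^{\mathsf T}y\neq 0$, let $K\in\mathbb{R}^{n_g\times n_g}$ be symmetric positive definite, let $\lambda>0$, and let $g^{\mathrm{Reg}}=(\Phi^{\mathsf T}\Phi+\lambda K^{-1})^{-1}\Phi^{\mathsf T}y$. Then $g^{\mathrm{Reg}}\neq 0$, $\Phi g^{\mathrm{Reg}}-y\neq 0$, and with $$\rho := \lambda\,\frac{\big((g^{\mathrm{Reg}})^{\mathsf T}K^{-1}g^{\mathrm{Reg}}\big)^{1/2}}{\|\Phi g^{\mathrm{Reg}}-y\|}>0,$$ the vector $g^{\mathrm{Reg}}$ is a minimizer of $$\min_{g\in\mathbb{R}^{n_g}}\ \max_{\substack{\Delta\in\mathbb{R}^{n_{\mathscr D}\times n_g}\\ \|\Delta\|_K\le\rho}} \|(\Phi+\Delta)g-y\|.$$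
   Context: $\|\cdot\|$ denotes the Euclidean norm. For a symmetric positive definite $K\in\mathbb{R}^{n_g\times n_g}$ and a matrix $\Delta\in\mathbb{R}^{n_{\mathscr D}\times n_g}$, $\|\Delta\|_K := \big(\mathrm{tr}(\Delta K\Delta^{\mathsf T})\big)^{1/2}$. *)

From HB Require Import structures.
From mathcomp Require Import all_boot all_order all_algebra.
From mathcomp Require Import classical_sets reals.
Set Implicit Arguments. Unset Strict Implicit. Unset Printing Implicit Defensive.
Import Order.TTheory GRing.Theory Num.Theory.
Local Open Scope ring_scope.
Local Open Scope classical_set_scope.

Definition enorm (R : realType) (m : nat) (v : 'cV[R]_m) : R :=
  Num.sqrt (\sum_(i < m) v i 0 ^+ 2).

Definition Knorm (R : realType) (nD ng : nat) (K : 'M[R]_ng)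
  (D : 'M[R]_(nD, ng)) : R := Num.sqrt (\tr (D *m K *m D^T)).

Definition sym_posdef (R : realType) (n : nat) (K : 'M[R]_n) : Prop :=
  K^T = K /\ forall v : 'cV[R]_n, v != 0 -> 0 < (v^T *m K *m v) 0 0.

Definition gReg (R : realType) (nD ng : nat) (Phi : 'M[R]_(nD, ng))
  (y : 'cV[R]_nD) (K : 'M[R]_ng) (lam : R) : 'cV[R]_ng :=
  invmx (Phi^T *m Phi + lam *: invmx K) *m (Phi^T *m y).

(* Worst-case residual: max over ||Delta||_K <= rho of ||(Phi+Delta) g - y||,
   written as the supremum of the (compact, attained) set of values. *)
Definition worst_resid (R : realType) (nD ng : nat) (Phi : 'M[R]_(nD, ng))
  (y : 'cV[R]_nD) (K : 'M[R]_ng) (rho : R) (g : 'cV[R]_ng) : R :=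
  sup [set r : R | exists D : 'M[R]_(nD, ng),
                     Knorm K D <= rho /\ r = enorm ((Phi + D) *m g - y)].

From HB Require Import structures.
From mathcomp Require Import all_boot all_order all_algebra.
From mathcomp Require Import classical_sets reals.
From mathcomp Require Import ring lra.
Import Order.TTheory GRing.Theory Num.Theory.
Set Implicit Arguments. Unset Strict Implicit. Unset Printing Implicit Defensive.
Local Open Scope ring_scope.

(* Write r = Phi g - y and h = (g^T K^-1 g)^(1/2) for g = gReg.
   - Upper bound, valid for every g: by Cauchy-Schwarz in the K-inner product,
     |Delta g| <= ||Delta||_K h, so the worst-case residual of g is at most
     |Phi g - y| + rho h.
   - Lower bound: the normal equations of the regularised problem read
     Phi^T r = -lam K^-1 g.  With u = r/|r|, w = K^-1 g and the rank-one
     perturbation Dw = (rho/h) u w^T one has ||Dw||_K = rho,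
     (Phi + Dw) g - y = (|r| + rho h) u, and, exactly for the chosen rho,
     u^T (Phi + Dw) = 0.  By Pythagoras every g' then has
     |(Phi + Dw) g' - y| >= |r| + rho h, so the worst case for g' is at least
     the worst case for g. *)

Section QuadraticForm.
Variables (R : realType) (n : nat).
Implicit Types (M : 'M[R]_n) (x z : 'cV[R]_n).

Definition qf M x z : R := (x^T *m M *m z) 0 0.

Lemma qfC M x z : M^T = M -> qf M x z = qf M z x.
Proof.
move=> hM; rewrite /qf.
have -> : (x^T *m M *m z) 0 0 = ((x^T *m M *m z)^T) 0 0 by rewrite [RHS]mxE.
by rewrite !trmx_mul !trmxK hM mulmxA.
Qed.

Lemma qfDl M x1 x2 z : qf M (x1 + x2) z = qf M x1 z + qf M x2 z.
Proof. by rewrite /qf linearD /= !mulmxDl mxE. Qed.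

Lemma qfDr M x z1 z2 : qf M x (z1 + z2) = qf M x z1 + qf M x z2.
Proof. by rewrite /qf mulmxDr mxE. Qed.

Lemma qfZl M (t : R) x z : qf M (t *: x) z = t * qf M x z.
Proof. by rewrite /qf linearZ /= -!scalemxAl mxE. Qed.

Lemma qfZr M (t : R) x z : qf M x (t *: z) = t * qf M x z.
Proof. by rewrite /qf -!scalemxAr mxE. Qed.

Lemma qf0r M x : qf M x 0 = 0.
Proof. by rewrite /qf mulmx0 mxE. Qed.

Lemma qf_ge0 M x : sym_posdef M -> 0 <= qf M x x.
Proof.
move=> [_ hpos]; have [->|hx] := eqVneq x 0; first by rewrite qf0r.
exact/ltW/hpos.
Qed.

(* Cauchy-Schwarz for a positive definite form: expand the nonnegative
   quantity qf M v v at v = a + t b with t = -(a.b)/(b.b). *)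
Lemma qf_CS M a b : sym_posdef M -> qf M a b ^+ 2 <= qf M a a * qf M b b.
Proof.
move=> hM; have [->|hb] := eqVneq b 0; first by rewrite !qf0r expr0n /= mulr0.
have hbb : 0 < qf M b b by apply: hM.2.
set t := - (qf M a b / qf M b b).
have := qf_ge0 (a + t *: b) hM.
rewrite qfDl !qfDr !qfZl !qfZr (qfC b a hM.1).
have -> : qf M a a + t * qf M a b + (t * qf M a b + t * (t * qf M b b)) =
          (qf M a a * qf M b b - qf M a b ^+ 2) / qf M b b.
  by rewrite /t; field; exact: lt0r_neq0.
by rewrite pmulr_lge0 ?invr_gt0 // subr_ge0.
Qed.

End QuadraticForm.

Section EuclideanNorm.
Variables (R : realType) (n : nat).
Implicit Types (u v a b : 'cV[R]_n).

Lemma qf1E v : qf 1%:M v v = \sum_(i < n) v i 0 ^+ 2.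
Proof. by rewrite /qf mulmx1 mxE; apply: eq_bigr => i _; rewrite mxE expr2. Qed.

Lemma enormE v : enorm v = Num.sqrt (qf 1%:M v v).
Proof. by rewrite qf1E. Qed.

Lemma id_posdef : sym_posdef (1%:M : 'M[R]_n).
Proof.
split=> [|v hv]; first exact: trmx1.
rewrite -/(qf _ v v) qf1E lt_def sumr_ge0 ?andbT => [|i _]; last exact: sqr_ge0.
apply: contra hv => /eqP /psumr_eq0P hsum; apply/eqP/matrixP => i j.
rewrite (ord1 j) mxE; apply/eqP; rewrite -sqrf_eq0; apply/eqP.
by apply: hsum => // k _; exact: sqr_ge0.
Qed.
#[local] Hint Resolve id_posdef : core.

Lemma enorm_ge0 v : 0 <= enorm v.
Proof. exact: sqrtr_ge0. Qed.

Lemma enorm_gt0 v : v != 0 -> 0 < enorm v.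
Proof. by move=> hv; rewrite enormE sqrtr_gt0; apply: id_posdef.2. Qed.

Lemma enorm_sqr v : enorm v ^+ 2 = qf 1%:M v v.
Proof. by rewrite enormE sqr_sqrtr // qf_ge0. Qed.

Lemma enormZ (c : R) v : enorm (c *: v) = `|c| * enorm v.
Proof. by rewrite !enormE qfZl qfZr mulrA -expr2 sqrtrM ?sqr_ge0 // sqrtr_sqr. Qed.

Lemma enorm_triangle a b : enorm (a + b) <= enorm a + enorm b.
Proof.
rewrite -(ger0_norm (addr_ge0 (enorm_ge0 a) (enorm_ge0 b))) -sqrtr_sqr.
rewrite enormE ler_sqrt ?sqr_ge0 //.
rewrite qfDl !qfDr (qfC b a id_posdef.1) sqrrD -!enorm_sqr.
have hab : qf 1%:M a b <= enorm a * enorm b.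
  rewrite !enormE -sqrtrM ?qf_ge0 //.
  rewrite (le_trans (ler_norm _)) // -sqrtr_sqr.
  by rewrite ler_sqrt ?qf_CS ?mulr_ge0 ?qf_ge0.
lra.
Qed.

Lemma enorm_orthoD a b : qf 1%:M a b = 0 -> enorm a <= enorm (a + b).
Proof.
move=> hab; rewrite !enormE ler_sqrt ?qf_ge0 //.
rewrite qfDl !qfDr hab (qfC b a id_posdef.1) hab.
by rewrite addr0 add0r lerDl qf_ge0.
Qed.

End EuclideanNorm.
#[global] Hint Resolve id_posdef : core.

Section PositiveDefinite.
Variables (R : realType) (n : nat) (K : 'M[R]_n).
Hypothesis hK : sym_posdef K.

Lemma posdef_unit : K \in unitmx.
Proof.
rewrite -row_free_unit; apply: inj_row_free => v hv.
apply/eqP; apply: contraT => hv0.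
have : v^T != 0 by rewrite -(inj_eq (@trmx_inj _ _ _)) trmxK trmx0.
by move=> /hK.2; rewrite trmxK hv mul0mx mxE ltxx.
Qed.

Lemma qf_invmx v : qf (invmx K) v v = qf K (invmx K *m v) (invmx K *m v).
Proof.
by rewrite /qf trmx_mul trmx_inv hK.1 !mulmxA -(mulmxA _ _ K) mulVmx ?posdef_unit // mulmx1.
Qed.

Lemma inv_posdef : sym_posdef (invmx K).
Proof.
split=> [|v hv]; first by rewrite trmx_inv hK.1.
rewrite -/(qf _ v v) qf_invmx; apply: hK.2.
apply: contra hv => /eqP hw0; apply/eqP.
by rewrite -(mulKVmx posdef_unit v) hw0 mulmx0.
Qed.

End PositiveDefinite.

Section KNorm.
Variables (R : realType) (nD ng : nat) (K : 'M[R]_ng).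
Implicit Types (D : 'M[R]_(nD, ng)) (v : 'cV[R]_ng).

Lemma Knorm_rows D : \tr (D *m K *m D^T) = \sum_i qf K (row i D)^T (row i D)^T.
Proof.
apply: eq_bigr => i _; rewrite /qf trmxK tr_row -row_mul colE mulmxA -colE -row_mul.
by rewrite [RHS]mxE [RHS]mxE.
Qed.

Lemma Knorm_sqr_ge0 D : sym_posdef K -> 0 <= \tr (D *m K *m D^T).
Proof. by move=> hK; rewrite Knorm_rows sumr_ge0 // => i _; exact: qf_ge0. Qed.

Lemma Knorm0 : Knorm K (0 : 'M[R]_(nD, ng)) = 0.
Proof. by rewrite /Knorm !mul0mx mxtrace0 sqrtr0. Qed.

Lemma mulmx_entry_qf D v i :
  K \in unitmx -> (D *m v) i 0 = qf K (row i D)^T (invmx K *m v).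
Proof.
move=> hu; rewrite /qf trmxK !mulmxA -(mulmxA _ K) mulmxV // mulmx1.
by rewrite -row_mul [RHS]mxE.
Qed.

(* |D v| <= ||D||_K (v^T K^-1 v)^(1/2), by Cauchy-Schwarz row by row. *)
Lemma enorm_mulmx_le D v :
  sym_posdef K -> enorm (D *m v) <= Knorm K D * Num.sqrt (qf (invmx K) v v).
Proof.
move=> hK; have hKi := inv_posdef hK.
rewrite /Knorm -sqrtrM ?Knorm_sqr_ge0 // /enorm ler_sqrt; last first.
  by rewrite mulr_ge0 ?Knorm_sqr_ge0 ?qf_ge0.
rewrite Knorm_rows mulr_suml; apply: ler_sum => i _.
by rewrite (mulmx_entry_qf _ _ _ (posdef_unit hK)) qf_invmx //; exact: qf_CS.
Qed.

Lemma Knorm_rank1 (a s : R) (u : 'cV[R]_nD) (w : 'cV[R]_ng) :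
  w^T *m K *m w = s%:M -> u^T *m u = 1%:M ->
  \tr ((a *: (u *m w^T)) *m K *m (a *: (u *m w^T))^T) = a ^+ 2 * s.
Proof.
move=> hw hu; rewrite linearZ /= trmx_mul trmxK -!scalemxAl -scalemxAr scalerA.
have -> : u *m w^T *m K *m (w *m u^T) = u *m (w^T *m K *m w) *m u^T.
  by rewrite !mulmxA.
rewrite hw mul_mx_scalar -scalemxAl !mxtraceZ mxtrace_mulC hu mxtrace_scalar.
by rewrite mulr1 expr2.
Qed.

End KNorm.

Section WorstCaseResidual.
Variables (R : realType) (nD ng : nat) (Phi : 'M[R]_(nD, ng)) (y : 'cV[R]_nD).
Variables (K : 'M[R]_ng) (rho : R) (g : 'cV[R]_ng).
Hypotheses (hK : sym_posdef K) (hrho : 0 <= rho).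

Lemma resid_perturb_le (D : 'M[R]_(nD, ng)) : Knorm K D <= rho ->
  enorm ((Phi + D) *m g - y) <= enorm (Phi *m g - y) + rho * Num.sqrt (qf (invmx K) g g).
Proof.
move=> hD; rewrite mulmxDl addrAC (le_trans (enorm_triangle _ _)) // lerD2l.
by rewrite (le_trans (enorm_mulmx_le _ _ hK)) // ler_wpM2r ?sqrtr_ge0.
Qed.

Let resids : set R := fun r => exists D : 'M[R]_(nD, ng),
                 Knorm K D <= rho /\ r = enorm ((Phi + D) *m g - y).

Lemma resids_has_sup : has_sup resids.
Proof.
split; first by exists (enorm ((Phi + 0) *m g - y)), 0; rewrite Knorm0.
exists (enorm (Phi *m g - y) + rho * Num.sqrt (qf (invmx K) g g)).
by move=> _ [D [hD ->]]; exact: resid_perturb_le.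
Qed.

Lemma worst_resid_le :
  worst_resid Phi y K rho g <= enorm (Phi *m g - y) + rho * Num.sqrt (qf (invmx K) g g).
Proof.
apply: ge_sup; first by case: resids_has_sup.
by move=> _ [D [hD ->]]; exact: resid_perturb_le.
Qed.

Lemma worst_resid_ge (D : 'M[R]_(nD, ng)) : Knorm K D <= rho ->
  enorm ((Phi + D) *m g - y) <= worst_resid Phi y K rho g.
Proof. by move=> hD; apply: (sup_upper_bound resids_has_sup); exists D. Qed.

End WorstCaseResidual.

Section RegularizedSolution.
Variables (R : realType) (nD ng : nat) (Phi : 'M[R]_(nD, ng)) (y : 'cV[R]_nD).
Variables (K : 'M[R]_ng) (lam : R).
Hypotheses (hK : sym_posdef K) (hlam : 0 < lam).

Definition regmx : 'M[R]_ng := Phi^T *m Phi + lam *: invmx K.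

(* It is positive definite: v^T regmx v = |Phi v|^2 + lam v^T K^-1 v. *)
Lemma regmx_posdef : sym_posdef regmx.
Proof.
have hKi := inv_posdef hK; split.
  by rewrite /regmx linearD linearZ /= trmx_mul trmxK hKi.1.
move=> v hv; rewrite -/(qf _ v v).
have -> : qf regmx v v = qf 1%:M (Phi *m v) (Phi *m v) + lam * qf (invmx K) v v.
  rewrite /qf /regmx mulmxDr mulmxDl mxE -scalemxAr -scalemxAl [in X in _ + X]mxE.
  by rewrite mulmx1 trmx_mul !mulmxA.
by apply: ltr_wpDl; [exact: qf_ge0 | rewrite mulr_gt0 // hKi.2].
Qed.

Lemma gReg_normal_eq : regmx *m gReg Phi y K lam = Phi^T *m y.
Proof. exact/mulKVmx/posdef_unit/regmx_posdef. Qed.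

Lemma gReg_stationary :
  Phi^T *m (Phi *m gReg Phi y K lam - y) = - (lam *: (invmx K *m gReg Phi y K lam)).
Proof.
rewrite mulmxBr mulmxA -gReg_normal_eq /regmx mulmxDl -scalemxAl.
by rewrite opprD addrA subrr add0r.
Qed.

Hypothesis hPy : Phi^T *m y != 0.

(* If Phi^T y != 0 then gReg and its residual are nonzero; the latter since a
   zero residual would force K^-1 gReg = 0 through stationarity. *)
Lemma gReg_neq0 : gReg Phi y K lam != 0.
Proof.
apply: contra hPy => /eqP hg0.
by rewrite -gReg_normal_eq hg0 mulmx0.
Qed.

Lemma gReg_resid_neq0 : Phi *m gReg Phi y K lam - y != 0.
Proof.
apply: contra gReg_neq0 => /eqP hr0; move: gReg_stationary; rewrite hr0 mulmx0.
move=> /esym /eqP; rewrite oppr_eq0 scaler_eq0 (gt_eqF hlam) /= => /eqP hw0.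
by rewrite -(mulKVmx (posdef_unit hK) (gReg _ _ _ _)) hw0 mulmx0.
Qed.

End RegularizedSolution.

Section SaddlePoint.
Variables (R : realType) (nD ng : nat) (Phi : 'M[R]_(nD, ng)) (y : 'cV[R]_nD).
Variables (K : 'M[R]_ng) (lam : R) (g : 'cV[R]_ng).
Hypotheses (hK : sym_posdef K) (hlam : 0 < lam) (hg : g != 0).
Hypotheses (hr : Phi *m g - y != 0)
  (hstat : Phi^T *m (Phi *m g - y) = - (lam *: (invmx K *m g))).

Let r := Phi *m g - y.
Let h := Num.sqrt (qf (invmx K) g g).
Let rho := lam * h / enorm r.
Let u := (enorm r)^-1 *: r.
Let w := invmx K *m g.
Let Dw := (rho / h) *: (u *m w^T).

Let h_gt0 : 0 < h.
Proof. by rewrite sqrtr_gt0; apply: (inv_posdef hK).2. Qed.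

Let h_sqr : h ^+ 2 = qf (invmx K) g g.
Proof. by rewrite sqr_sqrtr // qf_ge0 //; exact: inv_posdef. Qed.

Let nr_gt0 : 0 < enorm r.
Proof. exact: enorm_gt0. Qed.

Lemma saddle_rho_gt0 : 0 < rho.
Proof. by rewrite divr_gt0 // mulr_gt0. Qed.

Let u_unit : u^T *m u = 1%:M.
Proof.
rewrite [LHS]mx11_scalar -(mulmx1 u^T) -/(qf 1%:M u u) /u qfZl qfZr -enorm_sqr.
by congr _%:M; field; exact: lt0r_neq0.
Qed.

Let w_g : w^T *m g = (h ^+ 2)%:M.
Proof. by rewrite [LHS]mx11_scalar h_sqr /w trmx_mul (inv_posdef hK).1. Qed.

Let w_K_w : w^T *m K *m w = (h ^+ 2)%:M.
Proof. by rewrite [LHS]mx11_scalar h_sqr qf_invmx. Qed.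

Lemma Dw_Knorm : Knorm K Dw = rho.
Proof.
rewrite /Knorm /Dw (Knorm_rank1 _ w_K_w u_unit).
have -> : (rho / h) ^+ 2 * h ^+ 2 = rho ^+ 2 by field; exact: lt0r_neq0.
by rewrite sqrtr_sqr ger0_norm // ltW // saddle_rho_gt0.
Qed.

Lemma Dw_resid : (Phi + Dw) *m g - y = (enorm r + rho * h) *: u.
Proof.
have hru : r = enorm r *: u by rewrite /u scalerA mulfV ?scale1r // lt0r_neq0.
rewrite mulmxDl addrAC -/r {1}hru scalerDl; congr (_ + _).
rewrite /Dw -scalemxAl -mulmxA w_g mul_mx_scalar scalerA.
by congr (_ *: _); field; exact: lt0r_neq0.
Qed.

Lemma Dw_orth : u^T *m (Phi + Dw) = 0.
Proof.
have hPu : Phi^T *m u = - ((enorm r)^-1 * lam) *: w.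
  by rewrite /u -scalemxAr hstat scalerN scalerA scaleNr.
have hDu : Dw^T *m u = (rho / h) *: w.
  by rewrite /Dw [(_ *: (_ *m _))^T]linearZ /= trmx_mul trmxK -scalemxAl -mulmxA u_unit mulmx1.
apply: trmx_inj; rewrite trmx_mul trmxK trmx0 linearD /= mulmxDl hPu hDu -scalerDl.
have -> : - ((enorm r)^-1 * lam) + rho / h = 0 by rewrite /rho; field; rewrite !lt0r_neq0.
by rewrite scale0r.
Qed.

(* Pythagoras along the direction u gives the bound for every g'. *)
Lemma Dw_saddle g' : enorm r + rho * h <= enorm ((Phi + Dw) *m g' - y).
Proof.
have -> : (Phi + Dw) *m g' - y = (enorm r + rho * h) *: u + (Phi + Dw) *m (g' - g).
  by rewrite -Dw_resid mulmxBr [RHS]addrC -addrA addKr.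
have hc : 0 <= enorm r + rho * h.
  by rewrite addr_ge0 ?enorm_ge0 // mulr_ge0 ?ltW ?saddle_rho_gt0.
have hu1 : enorm u = 1.
  by rewrite enormE /qf mulmx1 u_unit mxE sqrtr1.
have hcu : enorm r + rho * h = enorm ((enorm r + rho * h) *: u).
  by rewrite enormZ hu1 mulr1 ger0_norm.
rewrite {1}hcu; apply: enorm_orthoD.
by rewrite qfZl /qf mulmx1 mulmxA Dw_orth mul0mx mxE mulr0.
Qed.

Lemma saddle_point : exists2 D : 'M[R]_(nD, ng), Knorm K D <= rho &
  forall g', enorm r + rho * h <= enorm ((Phi + D) *m g' - y).
Proof. by exists Dw; [rewrite Dw_Knorm | exact: Dw_saddle]. Qed.

End SaddlePoint.

Theorem mainTheorem3 (R : realType) (nD ng : nat) (Phi : 'M[R]_(nD, ng))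
  (y : 'cV[R]_nD) (K : 'M[R]_ng) (lam : R) :
  Phi^T *m y != 0 -> sym_posdef K -> 0 < lam ->
  let g := gReg Phi y K lam in
  g != 0 /\ Phi *m g - y != 0 /\
  (let rho := lam * Num.sqrt ((g^T *m invmx K *m g) 0 0)
              / enorm (Phi *m g - y) in
   0 < rho /\
   forall g' : 'cV[R]_ng,
     worst_resid Phi y K rho g <= worst_resid Phi y K rho g').
Proof.
move=> hPy hK hlam g.
have hg : g != 0 := gReg_neq0 hK hlam hPy.
have hr : Phi *m g - y != 0 := gReg_resid_neq0 hK hlam hPy.
have hstat := gReg_stationary Phi y hK hlam.
split=> //; split=> // rho.
have hrho : 0 < rho := saddle_rho_gt0 hK hlam hg hr.
split=> // g'.
have [D hD hsaddle] := saddle_point hK hlam hg hr hstat.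
apply: le_trans (worst_resid_le Phi y g hK (ltW hrho)) _.
apply: le_trans (hsaddle g') _.
by apply: (worst_resid_ge Phi y g' hK (ltW hrho)); exact: hD.
Qed.
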